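(* Let $\mathbb{X}$ be a real reflexive Banach space and $\mathbb{Y}$ a real normed space, $\epsilon\in[0,1)$, and $T,A\in\mathbb{K}(\mathbb{X},\mathbb{Y})$. Suppose $M_T=D\cup(-D)$, where $D$ is a nonempty compact connected subset of $S_{\mathbb{X}}$. Then $T\perp_B^{\epsilon}A$ if and only if there exists $x\in M_T$ such that $\|Tx+\lambda Ax\|^2\ge\|T\|^2-2\epsilon\|T\|\|\lambda A\|$ for all $\lambda\in\mathbb{R}$. Moreover, if in addition $M_T\subseteq M_A$, then $T\perp_B^{\epsilon}A$ if and only if there exists $x\in M_T$ with $Tx\perp_B^{\epsilon}Ax$.
   Context: $\mathbb{K}(\mathbb{X},\mathbb{Y})$ is the space of compact linear operators from $\mathbb{X}$ to $\mathbb{Y}$ with the operator norm. $S_{\mathbb{X}}$ is the unit sphere of $\mathbb{X}$; $M_T=\{x\in S_{\mathbb{X}}:\|Tx\|=\|T\|\}$. For $\epsilon\in[0,1)$ and $u,v$ in a normed space, $u\perp_B^{\epsilon}v$ means $\|u+\lambda v\|^2\ge\|u\|^2-2\epsilon\|u\|\|\lambda v\|$ for all $\lambda\in\mathbb{R}$. *)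

From Stdlib Require Import Reals Classical ClassicalEpsilon.
Open Scope R_scope.

Record NormedSpace := mkNormedSpace {
  ns_car :> Type;
  ns_zero : ns_car;
  ns_add : ns_car -> ns_car -> ns_car;
  ns_opp : ns_car -> ns_car;
  ns_scal : R -> ns_car -> ns_car;
  ns_norm : ns_car -> R;
  ns_add_assoc : forall x y z, ns_add x (ns_add y z) = ns_add (ns_add x y) z;
  ns_add_comm : forall x y, ns_add x y = ns_add y x;
  ns_add_0 : forall x, ns_add x ns_zero = x;
  ns_add_opp : forall x, ns_add x (ns_opp x) = ns_zero;
  ns_scal_assoc : forall a b x, ns_scal a (ns_scal b x) = ns_scal (a * b) x;
  ns_scal_1 : forall x, ns_scal 1 x = x;
  ns_scal_distr_l : forall a x y, ns_scal a (ns_add x y) = ns_add (ns_scal a x) (ns_scal a y);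
  ns_scal_distr_r : forall a b x, ns_scal (a + b) x = ns_add (ns_scal a x) (ns_scal b x);
  ns_norm_eq0 : forall x, ns_norm x = 0 -> x = ns_zero;
  ns_norm_triangle : forall x y, ns_norm (ns_add x y) <= ns_norm x + ns_norm y;
  ns_norm_scal : forall a x, ns_norm (ns_scal a x) = Rabs a * ns_norm x
}.

Arguments ns_zero {_}.
Arguments ns_add {_} _ _.
Arguments ns_opp {_} _.
Arguments ns_scal {_} _ _.
Arguments ns_norm {_} _.

Definition ns_sub {X : NormedSpace} (x y : X) : X := ns_add x (ns_opp y).

Definition converges {X : NormedSpace} (u : nat -> X) (l : X) : Prop :=
  forall e, 0 < e -> exists N, forall n, (N <= n)%nat -> ns_norm (ns_sub (u n) l) < e.

Definition cauchy {X : NormedSpace} (u : nat -> X) : Prop :=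
  forall e, 0 < e -> exists N, forall m n, (N <= m)%nat -> (N <= n)%nat ->
    ns_norm (ns_sub (u m) (u n)) < e.

Definition Banach (X : NormedSpace) : Prop :=
  forall u : nat -> X, cauchy u -> exists l, converges u l.

Definition strictly_increasing (phi : nat -> nat) : Prop :=
  forall n, (phi n < phi (S n))%nat.

(** Compact subset (metric space: sequential compactness). *)
Definition compact_set {X : NormedSpace} (K : X -> Prop) : Prop :=
  forall u : nat -> X, (forall n, K (u n)) ->
    exists phi l, strictly_increasing phi /\ K l /\ converges (fun n => u (phi n)) l.

Definition open_set {X : NormedSpace} (U : X -> Prop) : Prop :=
  forall x, U x -> exists r, 0 < r /\ forall y, ns_norm (ns_sub y x) < r -> U y.

(** Connected subset (in the subspace topology). *)
Definition connected_set {X : NormedSpace} (K : X -> Prop) : Prop :=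
  forall U V : X -> Prop, open_set U -> open_set V ->
    (forall x, K x -> U x \/ V x) ->
    (exists x, K x /\ U x) -> (exists x, K x /\ V x) ->
    exists x, K x /\ U x /\ V x.

Definition linear_map {X Y : NormedSpace} (T : X -> Y) : Prop :=
  (forall x y, T (ns_add x y) = ns_add (T x) (T y)) /\
  (forall a x, T (ns_scal a x) = ns_scal a (T x)).

(** sup { nB (T x) : ||x|| <= 1 } (when this least upper bound exists). *)
Definition sup_norm {X : NormedSpace} {B : Type} (nB : B -> R) (T : X -> B) : R :=
  epsilon (inhabits 0)
    (fun c => is_lub (fun r => exists x : X, ns_norm x <= 1 /\ r = nB (T x)) c).

Definition opnorm {X Y : NormedSpace} (T : X -> Y) : R := sup_norm (@ns_norm Y) T.

(** Compact linear operator: images of bounded sequences have convergent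
    subsequences (i.e. T maps the unit ball to a relatively compact set). *)
Definition compact_op {X Y : NormedSpace} (T : X -> Y) : Prop :=
  linear_map T /\
  forall u : nat -> X, (forall n, ns_norm (u n) <= 1) ->
    exists phi l, strictly_increasing phi /\ converges (fun n => T (u (phi n))) l.

(** Reflexivity: the canonical embedding X -> X** is onto.  Elements of X**
    are given by functions on (X -> R) that are linear and bounded on the
    bounded linear functionals (their values elsewhere are irrelevant). *)
Definition bounded_linear_functional {X : NormedSpace} (f : X -> R) : Prop :=
  ((forall x y, f (ns_add x y) = f x + f y) /\ (forall a x, f (ns_scal a x) = a * f x)) /\
  exists C, forall x, Rabs (f x) <= C * ns_norm x.

Definition dual_norm {X : NormedSpace} (f : X -> R) : R := sup_norm Rabs f.

Definition reflexive (X : NormedSpace) : Prop :=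
  forall Phi : (X -> R) -> R,
    (forall f g, bounded_linear_functional f -> bounded_linear_functional g ->
       Phi (fun x => f x + g x) = Phi f + Phi g) ->
    (forall a f, bounded_linear_functional f -> Phi (fun x => a * f x) = a * Phi f) ->
    (exists C, forall f, bounded_linear_functional f -> Rabs (Phi f) <= C * dual_norm f) ->
    exists x0 : X, forall f, bounded_linear_functional f -> Phi f = f x0.

Definition M_set {X Y : NormedSpace} (T : X -> Y) (x : X) : Prop :=
  ns_norm x = 1 /\ ns_norm (T x) = opnorm T.

Definition bj_eps {V : Type} (add : V -> V -> V) (scal : R -> V -> V) (nrm : V -> R)
    (eps : R) (u v : V) : Prop :=
  forall lam : R, (nrm (add u (scal lam v)))^2 >= (nrm u)^2 - 2 * eps * nrm u * nrm (scal lam v).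

Definition bj_vec {Y : NormedSpace} (eps : R) (u v : Y) : Prop :=
  bj_eps (@ns_add Y) (@ns_scal Y) (@ns_norm Y) eps u v.

Definition bj_op {X Y : NormedSpace} (eps : R) (T A : X -> Y) : Prop :=
  bj_eps (fun S1 S2 x => ns_add (S1 x) (S2 x)) (fun a S x => ns_scal a (S x))
         (@opnorm X Y) eps T A.

From Pilot Require Import Defs.
From Stdlib Require Import Reals Lra Lia Psatz Classical ClassicalEpsilon FunctionalExtensionality.
From mathcomp Require boolp classical_sets.
Open Scope R_scope.

(* If the inequality holds at a unit vector [x], it holds a fortiori for
   [|T + lam A| >= |(T + lam A) x|].  Conversely let [T ⊥_B^eps A] and [s = ±1].
   Take almost-maximizers [u_n] of [T + s r_n A] with [r_n -> 0]; compactness of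
   [T] and [A] and reflexivity of [X] give a limit point [x] of [u_n] in [M_T] with
   [T u_n -> T x] and [A u_n -> A x] along a subsequence.  If the inequality failed
   at [x] for some [lam = s mu], [mu > 0], convexity of [r |-> |T x + s r A x|]
   would make it fail by a margin of order [r] for all small [r], and this would
   contradict [T ⊥_B^eps A] at [lam = s r_n].  So each half-line is served by some
   point of [M_T], hence (the inequality being even in [x]) of [D].  At every point
   of [M_T] the inequality holds on at least one half-line, again by convexity and
   since it holds at [lam = 0].  The two sets of points of [D] serving each
   half-line are closed, cover [D] and are nonempty, so by connectedness some
   point serves both.  When [M_T ⊆ M_A], [|T| = |T x|] and [|lam A| = |lam A x|]
   turn the inequality at [x] into [T x ⊥_B^eps A x]. *)

(** * Hahn-Banach *)

(* Hahn-Banach is used both in a normed space and in the space of all real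
   functions on [X] (containing its dual), hence this abstract setting. *)

Record vector_space := VectorSpace {
  vs_car :> Type;
  vs_zero : vs_car;
  vs_add : vs_car -> vs_car -> vs_car;
  vs_scal : R -> vs_car -> vs_car;
  vs_add_assoc : forall x y z, vs_add x (vs_add y z) = vs_add (vs_add x y) z;
  vs_add_comm : forall x y, vs_add x y = vs_add y x;
  vs_add_0 : forall x, vs_add x vs_zero = x;
  vs_add_opp : forall x, vs_add x (vs_scal (-1) x) = vs_zero;
  vs_scal_assoc : forall a b x, vs_scal a (vs_scal b x) = vs_scal (a * b) x;
  vs_scal_1 : forall x, vs_scal 1 x = x;
  vs_scal_distr_l : forall a x y, vs_scal a (vs_add x y) = vs_add (vs_scal a x) (vs_scal a y);
  vs_scal_distr_r : forall a b x, vs_scal (a + b) x = vs_add (vs_scal a x) (vs_scal b x)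
}.

Arguments vs_zero {_}.
Arguments vs_add {_} _ _.
Arguments vs_scal {_} _ _.
Arguments vs_add_assoc {_} _ _ _.
Arguments vs_add_comm {_} _ _.
Arguments vs_add_0 {_} _.
Arguments vs_add_opp {_} _.
Arguments vs_scal_assoc {_} _ _ _.
Arguments vs_scal_1 {_} _.
Arguments vs_scal_distr_l {_} _ _ _.
Arguments vs_scal_distr_r {_} _ _ _.

Section VectorSpaceTheory.
Context {V : vector_space}.
Implicit Types x y z : V.

Lemma vs_scal0 x : vs_scal 0 x = vs_zero.
Proof.
  replace 0 with (1 + -1) by ring.
  rewrite vs_scal_distr_r, vs_scal_1. apply vs_add_opp.
Qed.

Lemma vs_0_add x : vs_add vs_zero x = x.
Proof. rewrite vs_add_comm. apply vs_add_0. Qed.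

Lemma vs_add_cancel_l x y y' : vs_add x y = vs_add x y' -> y = y'.
Proof.
  intro E. apply (f_equal (vs_add (vs_scal (-1) x))) in E.
  rewrite !vs_add_assoc, (vs_add_comm _ x), vs_add_opp, !vs_0_add in E. exact E.
Qed.

Lemma vs_add_scal_collect x y z a b :
  vs_add (vs_add x (vs_scal a z)) (vs_add y (vs_scal b z)) =
  vs_add (vs_add x y) (vs_scal (a + b) z).
Proof.
  rewrite vs_scal_distr_r, <- !vs_add_assoc. f_equal.
  rewrite vs_add_assoc, (vs_add_comm (vs_scal a z) y), <- vs_add_assoc. reflexivity.
Qed.

Lemma vs_scal_add_scal x z k a :
  vs_scal k (vs_add x (vs_scal a z)) = vs_add (vs_scal k x) (vs_scal (k * a) z).
Proof. rewrite vs_scal_distr_l, vs_scal_assoc. reflexivity. Qed.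

End VectorSpaceTheory.

Definition subspace {V : vector_space} (G : V -> Prop) : Prop :=
  G vs_zero /\ (forall x y, G x -> G y -> G (vs_add x y)) /\
  (forall a x, G x -> G (vs_scal a x)).

Definition linear_on {V : vector_space} (G : V -> Prop) (g : V -> R) : Prop :=
  (forall x y, G x -> G y -> g (vs_add x y) = g x + g y) /\
  (forall a x, G x -> g (vs_scal a x) = a * g x).

Definition sublinear_on {V : vector_space} (W : V -> Prop) (p : V -> R) : Prop :=
  (forall x y, W x -> W y -> p (vs_add x y) <= p x + p y) /\
  (forall a x, 0 < a -> W x -> p (vs_scal a x) = a * p x).

Section HahnBanach.
Variables (V : vector_space) (W W0 : V -> Prop) (p f0 : V -> R).
Hypotheses (HW : subspace W) (Hp : sublinear_on W p).

Definition dominated_extension (G : V -> Prop) (g : V -> R) : Prop :=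
  subspace G /\ (forall x, G x -> W x) /\ (forall x, W0 x -> G x) /\ linear_on G g /\
  (forall x, W0 x -> g x = f0 x) /\ (forall x, G x -> g x <= p x).

(* The candidate values [c] of a dominated extension [g'] to [G + R z] at [z]. *)
Lemma extension_constant (G : V -> Prop) g (z : V) : dominated_extension G g -> W z ->
  exists c, (forall x, G x -> g x - p (vs_add x (vs_scal (-1) z)) <= c) /\
            (forall y, G y -> c <= p (vs_add y z) - g y).
Proof.
  intros ((HG0 & Gadd & _) & HGW & _ & [gadd _] & _ & Hdom) Wz.
  destruct HW as (_ & Wadd & Wscal).
  assert (key : forall x y, G x -> G y ->
            g x - p (vs_add x (vs_scal (-1) z)) <= p (vs_add y z) - g y).
  { intros x y Gx Gy.
    assert (E : vs_add (vs_add x (vs_scal (-1) z)) (vs_add y (vs_scal 1 z)) = vs_add x y).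
    { rewrite vs_add_scal_collect. replace (-1 + 1) with 0 by ring.
      rewrite vs_scal0, vs_add_0. reflexivity. }
    rewrite vs_scal_1 in E.
    pose proof (proj1 Hp _ _ (Wadd _ _ (HGW x Gx) (Wscal (-1) z Wz))
                               (Wadd _ _ (HGW y Gy) Wz)) as Htri.
    rewrite E in Htri.
    pose proof (Hdom _ (Gadd x y Gx Gy)) as Hxy. rewrite gadd in Hxy by assumption.
    lra. }
  set (S := fun r => exists x, G x /\ r = g x - p (vs_add x (vs_scal (-1) z))).
  destruct (completeness S) as [c [cub club]].
  - exists (p (vs_add vs_zero z) - g vs_zero). intros r [x [Gx ->]]. auto.
  - exists (g vs_zero - p (vs_add vs_zero (vs_scal (-1) z))). exists vs_zero. auto.
  - exists c. split.
    + intros x Gx. apply cub. exists x. auto.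
    + intros y Gy. apply club. intros r [x [Gx ->]]. auto.
Qed.

Lemma span_add_unique (G : V -> Prop) (z x x' : V) a a' : subspace G -> ~ G z -> G x -> G x' ->
  vs_add x (vs_scal a z) = vs_add x' (vs_scal a' z) -> x = x' /\ a = a'.
Proof.
  intros (_ & Gadd & Gscal) nGz Gx Gx' E.
  destruct (Req_dec a a') as [<- | Ha].
  - split; [|reflexivity].
    rewrite !(vs_add_comm _ (vs_scal a z)) in E. exact (vs_add_cancel_l _ _ _ E).
  - exfalso. apply nGz.
    assert (E2 : vs_add x (vs_scal (-1) x') = vs_scal (a' + - a) z).
    { apply (f_equal (fun v => vs_add v (vs_add (vs_scal (-1) x') (vs_scal (- a) z)))) in E.
      rewrite !vs_add_scal_collect in E. replace (a + - a) with 0 in E by ring.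
      rewrite vs_scal0, vs_add_0, vs_add_opp, vs_0_add in E. exact E. }
    assert (Gd : G (vs_scal (a' + - a) z)) by (rewrite <- E2; auto).
    apply (Gscal (/ (a' + - a))) in Gd.
    rewrite vs_scal_assoc, Rinv_l, vs_scal_1 in Gd by lra. exact Gd.
Qed.

(* Positive homogeneity of [p] reduces the domination of [x + a z] to the
   two bounds on [c] applied to [x / |a|]. *)
Lemma extension_dominated (G : V -> Prop) g (z : V) c (x : V) a :
  dominated_extension G g -> W z -> G x ->
  (forall x, G x -> g x - p (vs_add x (vs_scal (-1) z)) <= c) ->
  (forall y, G y -> c <= p (vs_add y z) - g y) ->
  g x + a * c <= p (vs_add x (vs_scal a z)).
Proof.
  intros ((_ & _ & Gscal) & HGW & _ & [_ gscal] & _ & Hdom) Wz Gx Hlow Hup.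
  destruct HW as (_ & Wadd & Wscal).
  destruct (Req_dec a 0) as [-> | Ha].
  { rewrite vs_scal0, vs_add_0, Rmult_0_l, Rplus_0_r. auto. }
  set (b := Rabs a).
  assert (hb : 0 < b) by (apply Rabs_pos_lt; exact Ha).
  set (x1 := vs_scal (/ b) x).
  assert (Gx1 : G x1) by (apply Gscal; exact Gx).
  assert (gx : g x = b * g x1).
  { unfold x1. rewrite gscal by exact Gx. field. lra. }
  assert (Ex : forall s, a = s * b ->
            vs_add x (vs_scal a z) = vs_scal b (vs_add x1 (vs_scal s z))).
  { intros s Es. rewrite Es at 1. unfold x1.
    rewrite vs_scal_add_scal, vs_scal_assoc, Rinv_r, vs_scal_1, Rmult_comm by lra.
    reflexivity. }
  destruct (Rle_lt_dec 0 a) as [ha | ha].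
  - rewrite (Ex 1) by (unfold b; rewrite Rabs_pos_eq; lra).
    rewrite (proj2 Hp)
      by first [exact hb | apply Wadd; [apply HGW; exact Gx1 | apply Wscal; exact Wz]].
    rewrite vs_scal_1. pose proof (Hup x1 Gx1).
    replace a with b by (unfold b; rewrite Rabs_pos_eq; lra). nra.
  - rewrite (Ex (-1)) by (unfold b; rewrite Rabs_left; lra).
    rewrite (proj2 Hp)
      by first [exact hb | apply Wadd; [apply HGW; exact Gx1 | apply Wscal; exact Wz]].
    pose proof (Hlow x1 Gx1).
    replace a with (- b) by (unfold b; rewrite Rabs_left; lra). nra.
Qed.

Lemma dominated_extension_step (G : V -> Prop) g (z : V) :
  dominated_extension G g -> W z -> ~ G z ->
  exists G' g', dominated_extension G' g' /\ (forall v, G v -> G' v) /\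
    (forall v, G v -> g' v = g v) /\ G' z.
Proof.
  intros HI Wz nGz.
  destruct (extension_constant G g z HI Wz) as (c & Hlow & Hup).
  pose proof HI as (HG & HGW & HW0G & [gadd gscal] & Hf0 & _).
  pose proof HG as (G0 & Gadd & Gscal).
  destruct HW as (_ & Wadd & Wscal).
  set (G' := fun v => exists x a, G x /\ v = vs_add x (vs_scal a z)).
  set (g' := fun v => epsilon (inhabits 0)
               (fun r => exists x a, G x /\ v = vs_add x (vs_scal a z) /\ r = g x + a * c)).
  assert (g'E : forall x a, G x -> g' (vs_add x (vs_scal a z)) = g x + a * c).
  { intros x a Gx. unfold g'.
    destruct (epsilon_spec (inhabits 0) (fun r => exists x' a', G x' /\
                vs_add x (vs_scal a z) = vs_add x' (vs_scal a' z) /\ r = g x' + a' * c))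
      as (x' & a' & Gx' & E & ->).
    { exists (g x + a * c), x, a. auto. }
    destruct (span_add_unique G z x x' a a') as [-> ->]; auto. }
  assert (Gsplit : forall v, v = vs_add v (vs_scal 0 z))
    by (intro v; rewrite vs_scal0, vs_add_0; reflexivity).
  exists G', g'. split; [|split; [|split]].
  - split; [|split; [|split; [|split; [|split]]]].
    + split; [|split].
      * exists vs_zero, 0. auto.
      * intros v w (x & a & Gx & ->) (y & b & Gy & ->).
        exists (vs_add x y), (a + b). rewrite vs_add_scal_collect. auto.
      * intros k v (x & a & Gx & ->).
        exists (vs_scal k x), (k * a). rewrite vs_scal_add_scal. auto.
    + intros v (x & a & Gx & ->). apply Wadd; auto.
    + intros v Hv. exists v, 0. auto.
    + split.
      * intros v w (x & a & Gx & ->) (y & b & Gy & ->).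
        rewrite vs_add_scal_collect, !g'E, gadd by auto. ring.
      * intros k v (x & a & Gx & ->). rewrite vs_scal_add_scal, !g'E, gscal by auto. ring.
    + intros v Hv. rewrite (Gsplit v) at 1. rewrite g'E, Hf0 by auto. ring.
    + intros v (x & a & Gx & ->). rewrite g'E by auto.
      apply (extension_dominated G g z c x a); auto.
  - intros v Gv. exists v, 0. auto.
  - intros v Gv. rewrite (Gsplit v) at 1. rewrite g'E by auto. ring.
  - exists vs_zero, 1. rewrite vs_scal_1, vs_0_add. auto.
Qed.

Definition extends (s t : (V -> Prop) * (V -> R)) : Prop :=
  (forall v, fst s v -> fst t v) /\ (forall v, fst s v -> snd t v = snd s v).

Lemma dominated_extension_chain (C : (V -> Prop) * (V -> R) -> Prop) :
  (forall e, C e -> dominated_extension (fst e) (snd e)) ->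
  (forall e1 e2, C e1 -> C e2 -> extends e1 e2 \/ extends e2 e1) ->
  (exists e, C e) ->
  exists u, dominated_extension (fst u) (snd u) /\ forall e, C e -> extends e u.
Proof.
  intros HC Htot [e0 Ce0].
  set (Gu := fun v => exists e, C e /\ fst e v).
  set (gu := fun v => epsilon (inhabits 0) (fun r => exists e, C e /\ fst e v /\ r = snd e v)).
  assert (guE : forall e v, C e -> fst e v -> gu v = snd e v).
  { intros e v Ce He. unfold gu.
    destruct (epsilon_spec (inhabits 0) (fun r => exists e, C e /\ fst e v /\ r = snd e v))
      as (e' & Ce' & He' & ->).
    { exists (snd e v), e. auto. }
    destruct (Htot e e' Ce Ce') as [[_ h] | [_ h]]; [|symmetry]; auto. }
  assert (common : forall x y, Gu x -> Gu y -> exists e, C e /\ fst e x /\ fst e y).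
  { intros x y (e1 & C1 & H1) (e2 & C2 & H2).
    destruct (Htot e1 e2 C1 C2) as [[h _] | [h _]]; [exists e2 | exists e1]; auto. }
  exists (Gu, gu). split; [|intros e Ce; split; simpl; [intros v Hv; exists e | intros v Hv]; auto].
  pose proof (HC e0 Ce0) as (_ & _ & HW0G & _ & Hf0 & _).
  split; [|split; [|split; [|split; [|split]]]]; simpl.
  - split; [|split].
    + pose proof (HC e0 Ce0) as ((G0 & _) & _). exists e0. auto.
    + intros x y Hx Hy. destruct (common x y Hx Hy) as (e & Ce & ex & ey).
      pose proof (HC e Ce) as ((_ & Gadd & _) & _).
      exists e. auto.
    + intros a x (e & Ce & ex). pose proof (HC e Ce) as ((_ & _ & Gscal) & _).
      exists e. auto.
  - intros x (e & Ce & ex). apply (HC e Ce). exact ex.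
  - intros x Hx. exists e0. auto.
  - split.
    + intros x y Hx Hy. destruct (common x y Hx Hy) as (e & Ce & ex & ey).
      pose proof (HC e Ce) as ((_ & Gadd & _) & _ & _ & [gadd _] & _).
      rewrite !(guE e) by auto. auto.
    + intros a x (e & Ce & ex).
      pose proof (HC e Ce) as ((_ & _ & Gscal) & _ & _ & [_ gscal] & _).
      rewrite !(guE e) by auto. auto.
  - intros x Hx. rewrite (guE e0) by auto. auto.
  - intros x (e & Ce & ex). rewrite (guE e) by auto. apply (HC e Ce). exact ex.
Qed.

Theorem hahn_banach (HW0 : subspace W0) (HW0W : forall x, W0 x -> W x)
  (Hf : linear_on W0 f0) (Hfp : forall x, W0 x -> f0 x <= p x) :
  exists F, linear_on W F /\ (forall x, W0 x -> F x = f0 x) /\ (forall x, W x -> F x <= p x).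
Proof.
  assert (I0 : dominated_extension W0 f0)
    by (split; [exact HW0 | split; [exact HW0W | split; [auto | split; [exact Hf | split; auto]]]]).
  assert (base : forall e, dominated_extension (fst e) (snd e) -> extends (W0, f0) e).
  { intros e (_ & _ & HW0G & _ & Hf0 & _). split; simpl; auto. }
  set (E := {e : (V -> Prop) * (V -> R) | dominated_extension (fst e) (snd e)}).
  set (Rext := fun s t : E => boolp.asbool (extends (proj1_sig s) (proj1_sig t))).
  destruct (@classical_sets.ZL_preorder E (exist _ (W0, f0) I0) Rext) as [[[G g] HI] Hmax].
  - intro t. unfold Rext. rewrite boolp.asboolE. split; auto.
  - intros r s t. unfold Rext. rewrite !boolp.asboolE. intros [a1 b1] [a2 b2].
    split; auto. intros v Hv. rewrite b2; auto.
  - intros A Atot.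
    (* Adjoining [(W0, f0)], which every element extends, takes care of empty chains. *)
    destruct (dominated_extension_chain
                (fun e => e = (W0, f0) \/ exists t, A t /\ proj1_sig t = e)) as (u & Hu & ub).
    + intros e [-> | (t & _ & <-)]; [exact I0 | exact (proj2_sig t)].
    + intros e1 e2 [-> | (t1 & A1 & <-)] [-> | (t2 & A2 & <-)];
        try (left; apply base; first [exact I0 | exact (proj2_sig t2)]);
        try (right; apply base; exact (proj2_sig t1)).
      destruct (Atot t1 t2 A1 A2) as [h | h]; unfold Rext in h; rewrite boolp.asboolE in h; auto.
    + exists (W0, f0). auto.
    + exists (exist _ u Hu). intros s As. unfold Rext. rewrite boolp.asboolE.
      apply ub. right. exists s. auto.
  - assert (full : forall v, W v -> G v).
    { intros z Wz. apply NNPP. intro nGz.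
      destruct (dominated_extension_step G g z HI Wz nGz) as (G' & g' & HI' & sub & agree & Gz).
      assert (h : is_true (Rext (exist _ (G, g) HI) (exist _ (G', g') HI')))
        by (unfold Rext; rewrite boolp.asboolE; split; auto).
      apply Hmax in h. unfold Rext in h. rewrite boolp.asboolE in h. exact (nGz (proj1 h z Gz)). }
    assert (HGg : dominated_extension G g) by exact HI.
    destruct HGg as (_ & HGW & _ & [gadd gscal] & Hf0 & Hdom).
    exists g. split; [split|split]; auto.
Qed.
End HahnBanach.

(** * Normed spaces and sequences *)

Arguments ns_add_assoc {_} _ _ _.
Arguments ns_add_comm {_} _ _.
Arguments ns_add_0 {_} _.
Arguments ns_add_opp {_} _.
Arguments ns_scal_assoc {_} _ _ _.
Arguments ns_scal_1 {_} _.
Arguments ns_scal_distr_l {_} _ _ _.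
Arguments ns_scal_distr_r {_} _ _ _.
Arguments ns_norm_eq0 {_} _ _.
Arguments ns_norm_triangle {_} _ _.
Arguments ns_norm_scal {_} _ _.

Section NormedSpaceTheory.
Context {X : NormedSpace}.
Implicit Types x y z : X.

Lemma ns_0_add x : ns_add ns_zero x = x.
Proof. rewrite ns_add_comm. apply ns_add_0. Qed.

Lemma ns_add_cancel_l x y y' : ns_add x y = ns_add x y' -> y = y'.
Proof.
  intro E. apply (f_equal (ns_add (ns_opp x))) in E.
  rewrite !ns_add_assoc, (ns_add_comm _ x), ns_add_opp, !ns_0_add in E. exact E.
Qed.

Lemma ns_scal0 x : ns_scal 0 x = ns_zero.
Proof.
  apply (ns_add_cancel_l (ns_scal 0 x)).
  rewrite <- ns_scal_distr_r, Rplus_0_r, ns_add_0. reflexivity.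
Qed.

Lemma ns_scalN1 x : ns_scal (-1) x = ns_opp x.
Proof.
  apply (ns_add_cancel_l x). rewrite ns_add_opp.
  rewrite <- (ns_scal_1 x) at 1. rewrite <- ns_scal_distr_r.
  replace (1 + -1) with 0 by ring. apply ns_scal0.
Qed.

Lemma ns_norm_zero : ns_norm (@ns_zero X) = 0.
Proof. rewrite <- (ns_scal0 ns_zero), ns_norm_scal, Rabs_R0. ring. Qed.

Lemma ns_norm_opp x : ns_norm (ns_opp x) = ns_norm x.
Proof. rewrite <- ns_scalN1, ns_norm_scal, Rabs_left by lra. ring. Qed.

Lemma ns_norm_nonneg x : 0 <= ns_norm x.
Proof.
  pose proof (ns_norm_triangle x (ns_opp x)) as H.
  rewrite ns_add_opp, ns_norm_zero, ns_norm_opp in H. lra.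
Qed.

Lemma ns_opp_opp x : ns_opp (ns_opp x) = x.
Proof.
  rewrite <- !ns_scalN1, ns_scal_assoc. replace (-1 * -1) with 1 by ring. apply ns_scal_1.
Qed.

Lemma ns_sub_add x y : ns_add (ns_sub x y) y = x.
Proof.
  unfold ns_sub. rewrite <- ns_add_assoc, (ns_add_comm _ y), ns_add_opp, ns_add_0. reflexivity.
Qed.

Lemma ns_norm_sub_ge x y : ns_norm x - ns_norm y <= ns_norm (ns_sub x y).
Proof. pose proof (ns_norm_triangle (ns_sub x y) y) as H. rewrite ns_sub_add in H. lra. Qed.

Lemma ns_norm_sub_sym x y : ns_norm (ns_sub x y) = ns_norm (ns_sub y x).
Proof.
  unfold ns_sub. rewrite <- ns_norm_opp. f_equal.
  rewrite <- !ns_scalN1, ns_scal_distr_l, ns_scal_assoc.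
  replace (-1 * -1) with 1 by ring. rewrite ns_scal_1. apply ns_add_comm.
Qed.

Lemma ns_sub_eq0 x y : ns_norm (ns_sub x y) = 0 -> x = y.
Proof.
  intro H. apply ns_norm_eq0 in H. rewrite <- (ns_sub_add x y), H. apply ns_0_add.
Qed.

Lemma ns_add_swap x y z (w : X) :
  ns_add (ns_add x y) (ns_add z w) = ns_add (ns_add x z) (ns_add y w).
Proof.
  rewrite <- !ns_add_assoc. f_equal. rewrite !ns_add_assoc. f_equal. apply ns_add_comm.
Qed.

Lemma ns_norm_add_scal_convex x y a b rho : 0 <= rho <= 1 ->
  ns_norm (ns_add x (ns_scal ((1 - rho) * a + rho * b) y)) <=
  (1 - rho) * ns_norm (ns_add x (ns_scal a y)) + rho * ns_norm (ns_add x (ns_scal b y)).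
Proof.
  intro hr.
  replace (ns_add x (ns_scal ((1 - rho) * a + rho * b) y)) with
    (ns_add (ns_scal (1 - rho) (ns_add x (ns_scal a y))) (ns_scal rho (ns_add x (ns_scal b y)))).
  - eapply Rle_trans; [apply ns_norm_triangle|].
    rewrite !ns_norm_scal, !Rabs_pos_eq by lra. lra.
  - rewrite !ns_scal_distr_l, !ns_scal_assoc, ns_add_swap, <- !ns_scal_distr_r.
    replace (1 - rho + rho) with 1 by ring. rewrite ns_scal_1. reflexivity.
Qed.

End NormedSpaceTheory.

Definition vector_space_of (X : NormedSpace) : vector_space.
Proof.
  refine (VectorSpace X ns_zero ns_add ns_scal _ _ _ _ _ _ _ _).
  - apply ns_add_assoc. - apply ns_add_comm. - apply ns_add_0.
  - intro x. rewrite ns_scalN1. apply ns_add_opp.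
  - apply ns_scal_assoc. - apply ns_scal_1. - apply ns_scal_distr_l. - apply ns_scal_distr_r.
Defined.

Definition function_space (T : Type) : vector_space.
Proof.
  refine (VectorSpace (T -> R) (fun _ => 0) (fun f g x => f x + g x) (fun a f x => a * f x)
            _ _ _ _ _ _ _ _);
  intros; apply functional_extensionality; intros; ring.
Defined.

Lemma Un_cv_const c : Un_cv (fun _ => c) c.
Proof. intros e he. exists O. intros n _. unfold Rdist. rewrite Rminus_diag, Rabs_R0. exact he. Qed.

Lemma inv_INR_S_eventually_lt b : 0 < b -> exists N, forall n, (N <= n)%nat -> / INR (S n) < b.
Proof.
  intro hb. destruct (INR_unbounded (/ b)) as [N HN]. exists N. intros n hn.
  assert (INR N <= INR (S n)) by (apply le_INR; lia).
  assert (0 < / b) by (apply Rinv_0_lt_compat; exact hb).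
  rewrite <- (Rinv_inv b). apply Rinv_lt_contravar; [apply Rmult_lt_0_compat|]; lra.
Qed.

Lemma strictly_increasing_ge phi : strictly_increasing phi -> forall k, (k <= phi k)%nat.
Proof. intros H k. induction k; [lia|]. specialize (H k). lia. Qed.

Lemma strictly_increasing_comp phi psi :
  strictly_increasing phi -> strictly_increasing psi -> strictly_increasing (fun n => phi (psi n)).
Proof.
  intros hphi hpsi n.
  assert (mono : forall m k, (m < k)%nat -> (phi m < phi k)%nat).
  { intros m k hmk. induction k; [lia|].
    destruct (Nat.eq_dec m k) as [->|ne]; [apply hphi|]. specialize (hphi k). lia. }
  apply mono, hpsi.
Qed.

Lemma Un_cv_subseq (a : nat -> R) L phi :
  Un_cv a L -> strictly_increasing phi -> Un_cv (fun n => a (phi n)) L.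
Proof.
  intros ha hphi e he. destruct (ha e he) as [N H]. exists N. intros n hn. apply H.
  pose proof (strictly_increasing_ge phi hphi n). lia.
Qed.

Section Convergence.
Context {X : NormedSpace}.
Implicit Types (u v : nat -> X) (l : X).

Lemma converges_subseq u l phi :
  converges u l -> strictly_increasing phi -> converges (fun n => u (phi n)) l.
Proof.
  intros hu hphi e he. destruct (hu e he) as [N H]. exists N. intros n hn. apply H.
  pose proof (strictly_increasing_ge phi hphi n). lia.
Qed.

Lemma converges_norm u l : converges u l -> Un_cv (fun n => ns_norm (u n)) (ns_norm l).
Proof.
  intros hu e he. destruct (hu e he) as [N H]. exists N. intros n hn. specialize (H n hn).
  unfold Rdist. apply Rabs_def1.
  - pose proof (ns_norm_sub_ge (u n) l). lra.
  - pose proof (ns_norm_sub_ge l (u n)). rewrite ns_norm_sub_sym in H0. lra.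
Qed.

Lemma converges_unique u l1 l2 : converges u l1 -> converges u l2 -> l1 = l2.
Proof.
  intros h1 h2. apply ns_sub_eq0. apply NNPP. intro ne.
  pose proof (ns_norm_nonneg (ns_sub l1 l2)).
  set (e := ns_norm (ns_sub l1 l2) / 2).
  destruct (h1 e) as [N1 H1]; [unfold e; lra|]. destruct (h2 e) as [N2 H2]; [unfold e; lra|].
  specialize (H1 (N1 + N2)%nat ltac:(lia)). specialize (H2 (N1 + N2)%nat ltac:(lia)).
  set (w := u (N1 + N2)%nat) in *.
  assert (E : ns_sub l1 l2 = ns_add (ns_sub l1 w) (ns_sub w l2)).
  { unfold ns_sub. rewrite <- ns_add_assoc. f_equal.
    rewrite ns_add_assoc, (ns_add_comm _ w), ns_add_opp, ns_0_add. reflexivity. }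
  pose proof (ns_norm_triangle (ns_sub l1 w) (ns_sub w l2)) as h.
  rewrite <- E, (ns_norm_sub_sym l1 w) in h. unfold e in *. lra.
Qed.

Lemma converges_add_scal u v l1 l2 m :
  converges u l1 -> converges v l2 ->
  converges (fun k => ns_add (u k) (ns_scal m (v k))) (ns_add l1 (ns_scal m l2)).
Proof.
  intros hu hv e he.
  assert (pm : 0 < Rabs m + 1) by (pose proof (Rabs_pos m); lra).
  destruct (hu (e / 2)) as [N1 H1]; [lra|].
  destruct (hv (e / 2 / (Rabs m + 1))) as [N2 H2]; [apply Rdiv_lt_0_compat; lra|].
  exists (N1 + N2)%nat. intros n hn. specialize (H1 n ltac:(lia)). specialize (H2 n ltac:(lia)).
  replace (ns_sub (ns_add (u n) (ns_scal m (v n))) (ns_add l1 (ns_scal m l2))) with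
    (ns_add (ns_sub (u n) l1) (ns_scal m (ns_sub (v n) l2))).
  - eapply Rle_lt_trans; [apply ns_norm_triangle|]. rewrite ns_norm_scal.
    assert (Rabs m * ns_norm (ns_sub (v n) l2) <= Rabs m * (e / 2 / (Rabs m + 1)))
      by (apply Rmult_le_compat_l; [apply Rabs_pos | lra]).
    assert (Rabs m * (e / 2 / (Rabs m + 1)) < e / 2).
    { apply (Rmult_lt_reg_r (Rabs m + 1)); [lra|].
      replace (Rabs m * (e / 2 / (Rabs m + 1)) * (Rabs m + 1)) with (Rabs m * (e / 2))
        by (field; lra). nra. }
    lra.
  - unfold ns_sub. rewrite <- !ns_scalN1, !ns_scal_distr_l, !ns_scal_assoc, ns_add_swap.
    replace (-1 * m) with (m * -1) by ring. reflexivity.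
Qed.

End Convergence.

(** * Operator norms and functionals *)

Section SupNorm.
Context {X : NormedSpace} {B : Type} (nB : B -> R) (T : X -> B).
Hypothesis homogeneous : forall a x, nB (T (ns_scal a x)) = Rabs a * nB (T x).
Hypothesis bounded : exists C, forall x, nB (T x) <= C * ns_norm x.

Let nB_T_zero : nB (T ns_zero) = 0.
Proof. rewrite <- (ns_scal0 ns_zero), homogeneous, Rabs_R0. ring. Qed.

Let unit_values := fun r => exists x : X, ns_norm x <= 1 /\ r = nB (T x).

Lemma sup_norm_is_lub : is_lub unit_values (sup_norm nB T).
Proof.
  assert (ex : exists c, is_lub unit_values c).
  { apply upper_bound_thm.
    - destruct bounded as [C HC]. exists (Rabs C). intros r [x [hx ->]].
      pose proof (ns_norm_nonneg x). pose proof (Rle_abs C). pose proof (Rabs_pos C).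
      specialize (HC x). apply (Rle_trans _ _ _ HC).
      destruct (Rle_dec 0 C); nra.
    - exists 0, ns_zero. rewrite ns_norm_zero, nB_T_zero. split; [lra | reflexivity]. }
  exact (epsilon_spec (inhabits 0) _ ex).
Qed.

Lemma sup_norm_ge x : ns_norm x <= 1 -> nB (T x) <= sup_norm nB T.
Proof. intro h. apply (proj1 sup_norm_is_lub). exists x; auto. Qed.

Lemma sup_norm_least M : (forall x, ns_norm x <= 1 -> nB (T x) <= M) -> sup_norm nB T <= M.
Proof. intro H. apply (proj2 sup_norm_is_lub). intros r [x [hx ->]]. auto. Qed.

Lemma sup_norm_nonneg : 0 <= sup_norm nB T.
Proof. rewrite <- nB_T_zero. apply sup_norm_ge. rewrite ns_norm_zero. lra. Qed.

Lemma sup_norm_bound x : nB (T x) <= sup_norm nB T * ns_norm x.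
Proof.
  destruct (Req_dec (ns_norm x) 0) as [e | ne].
  - rewrite e. apply ns_norm_eq0 in e. subst x. rewrite nB_T_zero. lra.
  - assert (px : 0 < ns_norm x) by (pose proof (ns_norm_nonneg x); lra).
    set (x' := ns_scal (/ ns_norm x) x).
    assert (nx' : ns_norm x' = 1).
    { unfold x'. rewrite ns_norm_scal, Rabs_pos_eq by (left; apply Rinv_0_lt_compat; auto).
      field. lra. }
    replace x with (ns_scal (ns_norm x) x') at 1
      by (unfold x'; rewrite ns_scal_assoc, Rinv_r, ns_scal_1 by lra; reflexivity).
    rewrite homogeneous, Rabs_pos_eq by lra.
    pose proof (sup_norm_ge x' ltac:(lra)). nra.
Qed.

Lemma sup_norm_approx d : 0 < d -> exists x, ns_norm x <= 1 /\ sup_norm nB T - d < nB (T x).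
Proof.
  intro hd. apply NNPP. intro hn.
  assert (sup_norm nB T <= sup_norm nB T - d).
  { apply sup_norm_least. intros x hx. apply Rnot_lt_le. intro hl. apply hn. exists x. auto. }
  lra.
Qed.

Lemma sup_norm_scale (T' : X -> B) a : (forall x, nB (T' x) = Rabs a * nB (T x)) ->
  sup_norm nB T' = Rabs a * sup_norm nB T.
Proof.
  intro HT'.
  assert (lub : is_lub (fun r => exists x : X, ns_norm x <= 1 /\ r = nB (T' x))
                       (Rabs a * sup_norm nB T)).
  { split.
    - intros r [x [hx ->]]. rewrite HT'.
      apply Rmult_le_compat_l; [apply Rabs_pos | apply sup_norm_ge; exact hx].
    - intros M HM. destruct (Req_dec a 0) as [-> | ha].
      + rewrite Rabs_R0, Rmult_0_l. apply HM. exists ns_zero.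
        rewrite ns_norm_zero, HT', nB_T_zero. split; [lra | ring].
      + assert (pa : 0 < Rabs a) by (apply Rabs_pos_lt; exact ha).
        assert (sup_norm nB T <= M / Rabs a).
        { apply sup_norm_least. intros x hx. apply (Rmult_le_reg_l (Rabs a)); [exact pa|].
          replace (Rabs a * (M / Rabs a)) with M by (field; lra).
          rewrite <- HT'. apply HM. exists x. auto. }
        apply (Rmult_le_compat_l (Rabs a)) in H; [|lra].
        replace (Rabs a * (M / Rabs a)) with M in H by (field; lra). exact H. }
  apply (is_lub_u _ _ _ (epsilon_spec (inhabits 0) _ (ex_intro _ _ lub)) lub).
Qed.

End SupNorm.

Definition bounded_linear {X Y : NormedSpace} (T : X -> Y) : Prop :=
  linear_map T /\ exists C, forall x, ns_norm (T x) <= C * ns_norm x.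

Section OperatorNorm.
Context {X Y : NormedSpace}.
Implicit Types T A : X -> Y.

Lemma linear_map_opp T x : linear_map T -> T (ns_opp x) = ns_opp (T x).
Proof. intros [_ Hs]. rewrite <- !ns_scalN1. apply Hs. Qed.

Lemma linear_map_sub T x y : linear_map T -> T (ns_sub x y) = ns_sub (T x) (T y).
Proof. intros HT. unfold ns_sub. rewrite (proj1 HT), linear_map_opp by exact HT. reflexivity. Qed.

Lemma linear_map_zero T : linear_map T -> T ns_zero = ns_zero.
Proof. intros [_ Hs]. rewrite <- (ns_scal0 ns_zero), Hs. apply ns_scal0. Qed.

Let norm_homogeneous T : linear_map T ->
  forall a x, ns_norm (T (ns_scal a x)) = Rabs a * ns_norm (T x).
Proof. intros [_ Hs] a x. rewrite Hs, ns_norm_scal. reflexivity. Qed.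

Lemma opnorm_bound T : bounded_linear T -> forall x, ns_norm (T x) <= opnorm T * ns_norm x.
Proof. intros [Hl Hb]. exact (sup_norm_bound ns_norm T (norm_homogeneous T Hl) Hb). Qed.

Lemma opnorm_ge T : bounded_linear T -> forall x, ns_norm x <= 1 -> ns_norm (T x) <= opnorm T.
Proof. intros [Hl Hb]. exact (sup_norm_ge ns_norm T (norm_homogeneous T Hl) Hb). Qed.

Lemma opnorm_approx T d : bounded_linear T -> 0 < d ->
  exists x, ns_norm x <= 1 /\ opnorm T - d < ns_norm (T x).
Proof. intros [Hl Hb]. exact (sup_norm_approx ns_norm T (norm_homogeneous T Hl) Hb d). Qed.

Lemma opnorm_least T M : bounded_linear T ->
  (forall x, ns_norm x <= 1 -> ns_norm (T x) <= M) -> opnorm T <= M.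
Proof. intros [Hl Hb]. exact (sup_norm_least ns_norm T (norm_homogeneous T Hl) Hb M). Qed.

Lemma opnorm_nonneg T : bounded_linear T -> 0 <= opnorm T.
Proof. intros [Hl Hb]. exact (sup_norm_nonneg ns_norm T (norm_homogeneous T Hl) Hb). Qed.

Lemma opnorm_scal A lam : bounded_linear A ->
  opnorm (fun x => ns_scal lam (A x)) = Rabs lam * opnorm A.
Proof.
  intros [Hl Hb]. apply (sup_norm_scale ns_norm A (norm_homogeneous A Hl) Hb).
  intro x. apply ns_norm_scal.
Qed.

Lemma bounded_linear_add_scal T A lam : bounded_linear T -> bounded_linear A ->
  bounded_linear (fun x => ns_add (T x) (ns_scal lam (A x))).
Proof.
  intros [[Ta Ts] [C1 H1]] [[Aa As] [C2 H2]]. split; [split|].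
  - intros x y. rewrite Ta, Aa, ns_scal_distr_l. apply ns_add_swap.
  - intros a x. rewrite Ts, As, ns_scal_distr_l, !ns_scal_assoc, Rmult_comm. reflexivity.
  - exists (C1 + Rabs lam * C2). intro x.
    eapply Rle_trans; [apply ns_norm_triangle|]. rewrite ns_norm_scal.
    specialize (H1 x). specialize (H2 x).
    assert (Rabs lam * ns_norm (A x) <= Rabs lam * (C2 * ns_norm x))
      by (apply Rmult_le_compat_l; [apply Rabs_pos | exact H2]).
    nra.
Qed.

Lemma opnorm_add_scal_ge T A lam : bounded_linear T -> bounded_linear A ->
  opnorm T - Rabs lam * opnorm A <= opnorm (fun x => ns_add (T x) (ns_scal lam (A x))).
Proof.
  intros HT HA.
  assert (opnorm T <= opnorm (fun x => ns_add (T x) (ns_scal lam (A x))) + Rabs lam * opnorm A);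
    [|lra].
  apply opnorm_least; [exact HT|]. intros x hx.
  pose proof (ns_norm_triangle (ns_add (T x) (ns_scal lam (A x))) (ns_scal (- lam) (A x))) as h.
  rewrite <- ns_add_assoc, <- ns_scal_distr_r, Rplus_opp_r, ns_scal0, ns_add_0,
    ns_norm_scal, Rabs_Ropp in h.
  pose proof (opnorm_ge _ (bounded_linear_add_scal T A lam HT HA) x hx).
  pose proof (opnorm_ge A HA x hx).
  pose proof (Rabs_pos lam).
  assert (Rabs lam * ns_norm (A x) <= Rabs lam * opnorm A) by (apply Rmult_le_compat_l; lra).
  simpl in *. lra.
Qed.

Lemma compact_op_bounded T : compact_op T -> bounded_linear T.
Proof.
  intros [Hl Hc]. split; [exact Hl|]. apply NNPP. intro nb.
  assert (H : forall n : nat, exists x, ns_norm x <= 1 /\ INR n < ns_norm (T x)).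
  { intro n. apply NNPP. intro hn. apply nb. exists (INR n). intro x.
    destruct (Req_dec (ns_norm x) 0) as [e | ne].
    - rewrite e. apply ns_norm_eq0 in e. subst x.
      rewrite linear_map_zero, ns_norm_zero by exact Hl. lra.
    - assert (px : 0 < ns_norm x) by (pose proof (ns_norm_nonneg x); lra).
      set (x' := ns_scal (/ ns_norm x) x).
      assert (nx' : ns_norm x' = 1).
      { unfold x'. rewrite ns_norm_scal, Rabs_pos_eq by (left; apply Rinv_0_lt_compat; auto).
        field. lra. }
      assert (ns_norm (T x') <= INR n).
      { apply Rnot_lt_le. intro hl. apply hn. exists x'. split; [lra | exact hl]. }
      replace x with (ns_scal (ns_norm x) x') at 1
        by (unfold x'; rewrite ns_scal_assoc, Rinv_r, ns_scal_1 by lra; reflexivity).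
      rewrite norm_homogeneous, Rabs_pos_eq by (exact Hl || lra). nra. }
  destruct (choice _ H) as [u Hu].
  destruct (Hc u (fun n => proj1 (Hu n))) as (phi & l & Hphi & Hconv).
  destruct (Hconv 1 Rlt_0_1) as [N HN].
  destruct (INR_unbounded (ns_norm l + 1)) as [m Hm].
  specialize (HN (N + m)%nat ltac:(lia)).
  pose proof (proj2 (Hu (phi (N + m)%nat))).
  pose proof (le_INR _ _ (Nat.le_trans _ _ _ (Nat.le_add_l m N)
                            (strictly_increasing_ge phi Hphi (N + m)%nat))).
  pose proof (ns_norm_sub_ge (T (u (phi (N + m)%nat))) l). lra.
Qed.

Lemma converges_bounded_linear T u l : bounded_linear T -> converges u l ->
  converges (fun n => T (u n)) (T l).
Proof.
  intros HT hu e he. pose proof (opnorm_nonneg T HT) as Tnn.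
  set (q := e / (opnorm T + 1)).
  assert (hq : 0 < q) by (apply Rdiv_lt_0_compat; lra).
  destruct (hu q hq) as [N H].
  exists N. intros n hn. specialize (H n hn). rewrite <- linear_map_sub by apply HT.
  eapply Rle_lt_trans; [apply opnorm_bound; exact HT|].
  replace e with ((opnorm T + 1) * q) by (unfold q; field; lra).
  pose proof (ns_norm_nonneg (ns_sub (u n) l)). nra.
Qed.

End OperatorNorm.

Section Functionals.
Context {X : NormedSpace}.
Implicit Types f g : X -> R.

Let abs_homogeneous f : bounded_linear_functional f ->
  forall a x, Rabs (f (ns_scal a x)) = Rabs a * Rabs (f x).
Proof. intros [[_ Hs] _] a x. rewrite Hs, Rabs_mult. reflexivity. Qed.

Lemma dual_norm_ge f : bounded_linear_functional f ->
  forall x, ns_norm x <= 1 -> Rabs (f x) <= dual_norm f.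
Proof. intro H. exact (sup_norm_ge Rabs f (abs_homogeneous f H) (proj2 H)). Qed.

Lemma dual_norm_least f M : bounded_linear_functional f ->
  (forall x, ns_norm x <= 1 -> Rabs (f x) <= M) -> dual_norm f <= M.
Proof. intro H. exact (sup_norm_least Rabs f (abs_homogeneous f H) (proj2 H) M). Qed.

Lemma dual_norm_scal a f : bounded_linear_functional f ->
  dual_norm (fun x => a * f x) = Rabs a * dual_norm f.
Proof.
  intro H. apply (sup_norm_scale Rabs f (abs_homogeneous f H) (proj2 H)).
  intro x. apply Rabs_mult.
Qed.

Lemma blf_zero : bounded_linear_functional (fun _ : X => 0).
Proof. split; [split|]; intros; try ring. exists 0. intro x. rewrite Rabs_R0. lra. Qed.

Lemma blf_add f g : bounded_linear_functional f -> bounded_linear_functional g ->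
  bounded_linear_functional (fun x => f x + g x).
Proof.
  intros [[fa fs] [C1 H1]] [[ga gs] [C2 H2]]. split; [split|].
  - intros x y. rewrite fa, ga. ring.
  - intros a x. rewrite fs, gs. ring.
  - exists (C1 + C2). intro x. eapply Rle_trans; [apply Rabs_triang|].
    specialize (H1 x). specialize (H2 x). lra.
Qed.

Lemma blf_scal a f : bounded_linear_functional f ->
  bounded_linear_functional (fun x => a * f x).
Proof.
  intros [[fa fs] [C H]]. split; [split|].
  - intros x y. rewrite fa. ring.
  - intros b x. rewrite fs. ring.
  - exists (Rabs a * C). intro x. rewrite Rabs_mult. specialize (H x).
    pose proof (Rabs_pos a).
    assert (Rabs a * Rabs (f x) <= Rabs a * (C * ns_norm x)) by (apply Rmult_le_compat_l; auto).
    lra.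
Qed.

Lemma blf_sub f x y : bounded_linear_functional f -> f (ns_sub x y) = f x - f y.
Proof. intros [[fa fs] _]. unfold ns_sub. rewrite fa, <- ns_scalN1, fs. ring. Qed.

Lemma dual_norm_sublinear :
  sublinear_on (V := function_space X) bounded_linear_functional dual_norm.
Proof.
  split.
  - intros f g hf hg. change (dual_norm (fun x => f x + g x) <= dual_norm f + dual_norm g).
    apply dual_norm_least; [apply blf_add; auto|]. intros x hx.
    eapply Rle_trans; [apply Rabs_triang|].
    pose proof (dual_norm_ge f hf x hx). pose proof (dual_norm_ge g hg x hx). lra.
  - intros a f ha hf. change (dual_norm (fun x => a * f x) = a * dual_norm f).
    rewrite dual_norm_scal, Rabs_pos_eq by (auto; lra). reflexivity.
Qed.

End Functionals.

Lemma ns_scal_inj_l {Z : NormedSpace} (w : Z) a b :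
  0 < ns_norm w -> ns_scal a w = ns_scal b w -> a = b.
Proof.
  intros hw E.
  assert (h : ns_norm (ns_add (ns_scal a w) (ns_scal (- b) w)) = 0).
  { rewrite E, <- ns_scal_distr_r, Rplus_opp_r, ns_scal0. apply ns_norm_zero. }
  rewrite <- ns_scal_distr_r, ns_norm_scal in h.
  destruct (Req_dec a b) as [| ne]; [assumption|].
  assert (0 < Rabs (a + - b)) by (apply Rabs_pos_lt; lra). nra.
Qed.

Lemma norming_functional (Z : NormedSpace) (w : Z) : exists g : Z -> R,
  bounded_linear_functional g /\ (forall x, Rabs (g x) <= ns_norm x) /\ g w = ns_norm w.
Proof.
  destruct (Req_dec (ns_norm w) 0) as [e | ne].
  { exists (fun _ => 0). split; [apply blf_zero | split].
    - intro x. rewrite Rabs_R0. apply ns_norm_nonneg.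
    - rewrite e. reflexivity. }
  assert (pw : 0 < ns_norm w) by (pose proof (ns_norm_nonneg w); lra).
  set (f0 := fun v : Z => epsilon (inhabits 0)
               (fun r => exists a, v = ns_scal a w /\ r = a * ns_norm w)).
  assert (f0E : forall a, f0 (ns_scal a w) = a * ns_norm w).
  { intro a. unfold f0.
    destruct (epsilon_spec (inhabits 0)
                (fun r => exists b, ns_scal a w = ns_scal b w /\ r = b * ns_norm w))
      as (b & E & ->).
    { exists (a * ns_norm w), a. auto. }
    rewrite (ns_scal_inj_l w a b pw E). reflexivity. }
  destruct (hahn_banach (vector_space_of Z) (fun _ => True) (fun v => exists a, v = ns_scal a w)
              ns_norm f0) as (F & [Fa Fs] & F0 & Fp).
  - split; [|split]; auto.
  - split.
    + intros x y _ _. apply ns_norm_triangle.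
    + intros a x ha _. simpl. rewrite ns_norm_scal, Rabs_pos_eq by lra. reflexivity.
  - split; [|split].
    + exists 0. simpl. rewrite ns_scal0. reflexivity.
    + intros x y [a ->] [b ->]. exists (a + b). simpl. rewrite ns_scal_distr_r. reflexivity.
    + intros k x [a ->]. exists (k * a). simpl. apply ns_scal_assoc.
  - auto.
  - split.
    + intros x y [a ->] [b ->]. simpl. rewrite <- ns_scal_distr_r, !f0E. ring.
    + intros k x [a ->]. simpl. rewrite ns_scal_assoc, !f0E. ring.
  - intros x [a ->]. rewrite f0E, ns_norm_scal. pose proof (Rle_abs a). nra.
  - assert (Fbound : forall x, Rabs (F x) <= ns_norm x).
    { intro x. apply Rabs_le. split.
      - pose proof (Fp (ns_scal (-1) x) I) as h.
        change (F (vs_scal (v := vector_space_of Z) (-1) x) <= ns_norm (ns_scal (-1) x)) in h.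
        rewrite (Fs (-1) x I), ns_norm_scal, Rabs_left in h by lra. lra.
      - apply Fp. exact I. }
    exists F. split; [|split; [exact Fbound|]].
    + split; [split|].
      * intros x y. apply Fa; exact I.
      * intros a x. apply Fs. exact I.
      * exists 1. intro x. rewrite Rmult_1_l. apply Fbound.
    + rewrite <- (ns_scal_1 w) at 1. rewrite (F0 (ns_scal 1 w)) by (exists 1; reflexivity).
      rewrite f0E. ring.
Qed.

(** * Reflexivity *)

(* A weakened weak limit: [x0] reproduces every limit of [f (v k)] that exists. *)
Definition weak_limit_point {X : NormedSpace} (v : nat -> X) (x0 : X) : Prop :=
  forall f L, bounded_linear_functional f -> Un_cv (fun k => f (v k)) L -> f x0 = L.

(* A Hahn-Banach extension of [f |-> lim f (v k)] is an element of the bidual,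
   hence by reflexivity an element of [X]. *)
Lemma reflexive_weak_limit_point (X : NormedSpace) (HXR : reflexive X)
  (v : nat -> X) (hv : forall k, ns_norm (v k) <= 1) :
  exists x0, ns_norm x0 <= 1 /\ weak_limit_point v x0.
Proof.
  set (lim := fun f : X -> R => epsilon (inhabits 0) (fun L => Un_cv (fun k => f (v k)) L)).
  assert (limE : forall f L, Un_cv (fun k => f (v k)) L -> lim f = L).
  { intros f L h. apply (UL_sequence (fun k => f (v k))); [|exact h].
    apply (epsilon_spec (inhabits 0) (fun L => Un_cv (fun k => f (v k)) L)). exists L. exact h. }
  destruct (hahn_banach (function_space X) bounded_linear_functional
              (fun f => bounded_linear_functional f /\ exists L, Un_cv (fun k => f (v k)) L)
              dual_norm lim) as (F & [Fa Fs] & F0 & Fp).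
  - split; [apply blf_zero | split; [apply blf_add | apply blf_scal]].
  - apply dual_norm_sublinear.
  - split; [|split].
    + split; [apply blf_zero|]. exists 0. exact (Un_cv_const 0).
    + intros f g [hf [L1 c1]] [hg [L2 c2]]. split; [apply blf_add; auto|].
      exists (L1 + L2). apply (CV_plus _ _ _ _ c1 c2).
    + intros a f [hf [L c]]. split; [apply blf_scal; auto|].
      exists (a * L). apply (CV_mult _ _ _ _ (Un_cv_const a) c).
  - intros f [hf _]. exact hf.
  - split.
    + intros f g [_ [L1 c1]] [_ [L2 c2]]. change (lim (fun x => f x + g x) = lim f + lim g).
      rewrite (limE f L1 c1), (limE g L2 c2). apply limE, (CV_plus _ _ _ _ c1 c2).
    + intros a f [_ [L c]]. change (lim (fun x => a * f x) = a * lim f).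
      rewrite (limE f L c). apply limE, (CV_mult _ _ _ _ (Un_cv_const a) c).
  - intros f [hf [L c]]. rewrite (limE f L c).
    apply (@Rle_cv_lim (fun k => f (v k)) (fun _ => dual_norm f)); [|exact c | apply Un_cv_const].
    intro k. exact (Rle_trans _ _ _ (Rle_abs _) (dual_norm_ge f hf (v k) (hv k))).
  - assert (Fabs : forall f, bounded_linear_functional f -> Rabs (F f) <= dual_norm f).
    { intros f hf. apply Rabs_le. split; [|apply Fp; exact hf].
      pose proof (Fp _ (blf_scal (-1) f hf)) as h.
      change (F (vs_scal (v := function_space X) (-1) f) <= dual_norm (fun x => -1 * f x)) in h.
      rewrite (Fs (-1) f hf), dual_norm_scal, Rabs_left in h by (exact hf || lra). lra. }
    destruct (HXR F) as [x0 Hx0].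
    + exact Fa.
    + exact Fs.
    + exists 1. intros f hf. rewrite Rmult_1_l. apply Fabs. exact hf.
    + exists x0. split.
      * destruct (norming_functional X x0) as (g & hg & gb & gx0).
        rewrite <- gx0, <- Hx0 by exact hg.
        apply (Rle_trans _ _ _ (Rle_abs _)), (Rle_trans _ _ _ (Fabs g hg)).
        apply dual_norm_least; [exact hg|]. intros x hx. specialize (gb x). lra.
      * intros f L hf hL. rewrite <- Hx0 by exact hf. rewrite F0 by (split; eauto).
        apply limE. exact hL.
Qed.

Lemma weak_limit_point_map {X Y : NormedSpace} (v : nat -> X) x0 (B : X -> Y) y :
  weak_limit_point v x0 -> bounded_linear B -> converges (fun k => B (v k)) y -> B x0 = y.
Proof.
  intros Hx0 HB hy.
  destruct (norming_functional Y (ns_sub (B x0) y)) as (g & hg & gb & gw).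
  assert (hf : bounded_linear_functional (fun x => g (B x))).
  { destruct hg as [[ga gs] _]. pose proof HB as [[Ba Bs] _]. split; [split|].
    - intros a b. rewrite Ba, ga. reflexivity.
    - intros a b. rewrite Bs, gs. reflexivity.
    - exists (opnorm B). intro x. eapply Rle_trans; [apply gb | apply opnorm_bound; exact HB]. }
  assert (cf : Un_cv (fun k => g (B (v k))) (g y)).
  { intros e he. destruct (hy e he) as [N HN]. exists N. intros n hn. unfold Rdist.
    rewrite <- blf_sub by exact hg. eapply Rle_lt_trans; [apply gb | apply HN; exact hn]. }
  apply ns_sub_eq0. rewrite <- gw, blf_sub by exact hg.
  rewrite (Hx0 _ _ hf cf). ring.
Qed.

(** * Birkhoff-James orthogonality *)

Lemma ns_norm_sq_segment {Y : NormedSpace} (x y : Y) t f b rho :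
  ns_norm x <= t -> ns_norm (ns_add x (ns_scal b y)) <= f -> 0 <= rho <= 1 ->
  ns_norm (ns_add x (ns_scal (rho * b) y)) ^ 2 <= (1 - rho) * t ^ 2 + rho * f ^ 2.
Proof.
  intros hx hf hrho.
  pose proof (ns_norm_add_scal_convex x y 0 b rho hrho) as h.
  rewrite ns_scal0, ns_add_0, Rmult_0_r, Rplus_0_l in h.
  pose proof (ns_norm_nonneg (ns_add x (ns_scal (rho * b) y))).
  assert ((1 - rho) * ns_norm x <= (1 - rho) * t) by (apply Rmult_le_compat_l; lra).
  assert (rho * ns_norm (ns_add x (ns_scal b y)) <= rho * f) by (apply Rmult_le_compat_l; lra).
  apply (Rle_trans _ (((1 - rho) * t + rho * f) ^ 2)); [apply pow_incr; lra|].
  assert (0 <= rho * (1 - rho) * (t - f) ^ 2) by (apply Rmult_le_pos; [nra | apply pow2_ge_0]).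
  assert (E : (1 - rho) * t ^ 2 + rho * f ^ 2 - ((1 - rho) * t + rho * f) ^ 2 =
              rho * (1 - rho) * (t - f) ^ 2) by ring.
  lra.
Qed.

(* By convexity of [r |-> |x + s r y|], a gap [d] at [r = mu] leaves a gap of
   order [r] for small [r], which absorbs a perturbation of order [r^2]. *)
Lemma ns_norm_sq_gap_small_step {Y : NormedSpace} (x y : Y) s t c eps mu g d r :
  Rabs s = 1 -> 0 <= eps -> 0 <= c -> 0 < mu -> 0 < d ->
  ns_norm x <= t -> ns_norm y <= c -> ns_norm (ns_add x (ns_scal (s * mu) y)) <= g ->
  g ^ 2 <= t ^ 2 - 2 * eps * t * (mu * c) - d / 2 ->
  0 < r -> r <= 1 -> r <= mu -> r * (2 * (t + c) + 1) <= d / (4 * mu) ->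
  (ns_norm (ns_add x (ns_scal (s * r) y)) + r ^ 2) ^ 2 < t ^ 2 - 2 * eps * t * (r * c).
Proof.
  intros hs heps hc hmu hd hx hy hg hgap hr r1 rmu rK.
  set (rho := r / mu).
  assert (hrho : 0 < rho <= 1).
  { unfold rho. split; [apply Rdiv_lt_0_compat; lra|].
    apply (Rmult_le_reg_r mu); [lra|]. field_simplify; lra. }
  assert (rhomu : rho * mu = r) by (unfold rho; field; lra).
  set (h := ns_norm (ns_add x (ns_scal (s * r) y))).
  assert (hnn : 0 <= h) by apply ns_norm_nonneg.
  assert (hh : h ^ 2 <= (1 - rho) * t ^ 2 + rho * g ^ 2).
  { unfold h. replace (s * r) with (rho * (s * mu)) by (rewrite <- rhomu; ring).
    apply ns_norm_sq_segment; lra. }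
  assert (h ^ 2 <= t ^ 2 - 2 * eps * t * (r * c) - rho * d / 2).
  { assert (rho * g ^ 2 <= rho * (t ^ 2 - 2 * eps * t * (mu * c) - d / 2))
      by (apply Rmult_le_compat_l; lra).
    rewrite <- rhomu. nra. }
  assert (hbound : h <= t + c).
  { unfold h. eapply Rle_trans; [apply ns_norm_triangle|].
    rewrite ns_norm_scal, Rabs_mult, hs, Rabs_pos_eq by lra.
    pose proof (ns_norm_nonneg y). nra. }
  assert (r * (r * (2 * (t + c) + 1)) <= rho * (d / 4)).
  { apply (Rle_trans _ (r * (d / (4 * mu)))); [apply Rmult_le_compat_l; lra|].
    right. unfold rho. field. lra. }
  assert (r ^ 2 * (2 * h + r ^ 2) <= r ^ 2 * (2 * (t + c) + 1))
    by (apply Rmult_le_compat_l; nra).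
  assert (0 < rho * d) by (apply Rmult_lt_0_compat; lra).
  nra.
Qed.

Lemma norm_gap_small_steps {Y : NormedSpace} (p q : nat -> Y) s t c eps mu f :
  Rabs s = 1 -> 0 <= eps -> 0 <= c -> 0 < mu ->
  (forall k, ns_norm (p k) <= t) -> (forall k, ns_norm (q k) <= c) ->
  Un_cv (fun k => ns_norm (ns_add (p k) (ns_scal (s * mu) (q k)))) f ->
  f ^ 2 < t ^ 2 - 2 * eps * t * (mu * c) ->
  exists delta N, 0 < delta /\ forall k r, (N <= k)%nat -> 0 < r <= delta ->
    (ns_norm (ns_add (p k) (ns_scal (s * r) (q k))) + r ^ 2) ^ 2 <
      t ^ 2 - 2 * eps * t * (r * c).
Proof.
  intros hs heps hc hmu hp hq hf hgap.
  assert (ht : 0 <= t) by (pose proof (ns_norm_nonneg (p O)); pose proof (hp O); lra).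
  assert (f0 : 0 <= f).
  { apply (@Rle_cv_lim (fun _ => 0) (fun k => ns_norm (ns_add (p k) (ns_scal (s * mu) (q k)))));
      [intro; apply ns_norm_nonneg | apply Un_cv_const | exact hf]. }
  set (d := t ^ 2 - 2 * eps * t * (mu * c) - f ^ 2).
  assert (hd : 0 < d) by (unfold d; lra).
  set (e := Rmin 1 (d / (2 * (2 * f + 1)))).
  assert (he : 0 < e) by (apply Rmin_pos; [lra | apply Rdiv_lt_0_compat; lra]).
  assert (hfe : (f + e) ^ 2 <= t ^ 2 - 2 * eps * t * (mu * c) - d / 2).
  { assert (e * (2 * f + 1) <= d / 2).
    { apply (Rle_trans _ (d / (2 * (2 * f + 1)) * (2 * f + 1))).
      - apply Rmult_le_compat_r; [lra | apply Rmin_r].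
      - right. field. lra. }
    pose proof (Rmin_l 1 (d / (2 * (2 * f + 1)))). fold e in H0. unfold d in *. nra. }
  set (K := 2 * (t + c) + 1).
  assert (hK : 0 < K) by (unfold K; lra).
  exists (Rmin 1 (Rmin mu (d / (4 * mu * K)))).
  destruct (hf e he) as [N HN]. exists N.
  split; [apply Rmin_pos; [lra | apply Rmin_pos; [lra | apply Rdiv_lt_0_compat; nra]]|].
  intros k r hk [hr hrd].
  specialize (HN k hk). unfold Rdist in HN. apply Rabs_def2 in HN.
  pose proof (Rmin_l 1 (Rmin mu (d / (4 * mu * K)))).
  pose proof (Rmin_r 1 (Rmin mu (d / (4 * mu * K)))).
  pose proof (Rmin_l mu (d / (4 * mu * K))). pose proof (Rmin_r mu (d / (4 * mu * K))).
  assert (rK : r * K <= d / (4 * mu)).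
  { apply (Rle_trans _ (d / (4 * mu * K) * K)); [apply Rmult_le_compat_r; lra|].
    right. field. lra. }
  apply (ns_norm_sq_gap_small_step _ _ s t c eps mu (f + e) d r hs heps hc hmu hd (hp k) (hq k));
    [lra | exact hfe | exact hr | lra | lra | unfold K in rK; exact rK].
Qed.

Definition bj_at {X Y : NormedSpace} (eps : R) (T A : X -> Y) (x : X) (lam : R) : Prop :=
  ns_norm (ns_add (T x) (ns_scal lam (A x))) ^ 2 >=
    opnorm T ^ 2 - 2 * eps * opnorm T * opnorm (fun y => ns_scal lam (A y)).

Section BirkhoffJames.
Context {X Y : NormedSpace} (eps : R) (T A : X -> Y).
Hypotheses (bT : bounded_linear T) (bA : bounded_linear A).

Lemma bj_atE x lam : bj_at eps T A x lam <->
  ns_norm (ns_add (T x) (ns_scal lam (A x))) ^ 2 >=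
    opnorm T ^ 2 - 2 * eps * opnorm T * (Rabs lam * opnorm A).
Proof. unfold bj_at. rewrite opnorm_scal by exact bA. tauto. Qed.

Lemma bj_at_zero x : 0 <= eps -> M_set T x -> bj_at eps T A x 0.
Proof.
  intros heps [_ hx]. apply bj_atE. rewrite ns_scal0, ns_add_0, hx, Rabs_R0. lra.
Qed.

Lemma bj_op_of_bj_at x : ns_norm x = 1 -> (forall lam, bj_at eps T A x lam) -> bj_op eps T A.
Proof.
  intros hx H lam. specialize (H lam). unfold bj_at in H. simpl.
  pose proof (opnorm_ge _ (bounded_linear_add_scal T A lam bT bA) x ltac:(lra)) as h.
  pose proof (ns_norm_nonneg (ns_add (T x) (ns_scal lam (A x)))).
  assert (ns_norm (ns_add (T x) (ns_scal lam (A x))) ^ 2 <=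
          opnorm (fun x => ns_add (T x) (ns_scal lam (A x))) ^ 2) by (apply pow_incr; lra).
  lra.
Qed.

Lemma bj_at_opp x lam : bj_at eps T A (ns_opp x) lam -> bj_at eps T A x lam.
Proof.
  unfold bj_at.
  replace (ns_norm (ns_add (T (ns_opp x)) (ns_scal lam (A (ns_opp x)))))
    with (ns_norm (ns_add (T x) (ns_scal lam (A x)))); [auto|].
  rewrite (linear_map_opp T), (linear_map_opp A) by (apply bT || apply bA).
  rewrite <- !ns_scalN1, ns_scal_assoc, (Rmult_comm lam (-1)), <- ns_scal_assoc,
    <- ns_scal_distr_l, ns_norm_scal, Rabs_left by lra.
  ring.
Qed.

(* At a norm-attaining point the inequality cannot fail on both half-lines:
   by convexity it would fail at [lam = 0], where [|T x| = |T|]. *)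
Lemma bj_at_halfline_dichotomy x : 0 <= eps -> 0 < opnorm T -> M_set T x ->
  (forall mu, 0 <= mu -> bj_at eps T A x mu) \/ (forall mu, 0 <= mu -> bj_at eps T A x (- mu)).
Proof.
  intros heps tpos Mx. pose proof Mx as [_ hx].
  pose proof (opnorm_nonneg A bA) as cnn.
  destruct (classic (forall mu, 0 <= mu -> bj_at eps T A x mu)) as [h | h]; [left; exact h | right].
  intros b hb. apply NNPP. intro nb. apply h. intros a ha. apply NNPP. intro na.
  destruct (Req_dec a 0) as [-> | a0]; [exact (na (bj_at_zero x heps Mx))|].
  destruct (Req_dec b 0) as [-> | b0]; [rewrite Ropp_0 in nb; exact (nb (bj_at_zero x heps Mx))|].
  rewrite bj_atE in na, nb. rewrite Rabs_pos_eq in na by lra.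
  rewrite Rabs_Ropp, Rabs_pos_eq in nb by lra.
  set (rho := a / (a + b)).
  assert (hrho : 0 <= rho <= 1).
  { unfold rho. split; [left; apply Rdiv_lt_0_compat; lra|].
    apply (Rmult_le_reg_r (a + b)); [lra|]. field_simplify; lra. }
  pose proof (ns_norm_add_scal_convex (T x) (A x) a (- b) rho hrho) as hc.
  replace ((1 - rho) * a + rho * - b) with 0 in hc by (unfold rho; field; lra).
  rewrite ns_scal0, ns_add_0, hx in hc.
  set (u1 := ns_norm (ns_add (T x) (ns_scal a (A x)))) in *.
  set (u2 := ns_norm (ns_add (T x) (ns_scal (- b) (A x)))) in *.
  assert (0 <= u1) by apply ns_norm_nonneg. assert (0 <= u2) by apply ns_norm_nonneg.
  assert (0 <= 2 * eps * opnorm T * (a * opnorm A)) by (repeat apply Rmult_le_pos; lra).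
  assert (0 <= 2 * eps * opnorm T * (b * opnorm A)) by (repeat apply Rmult_le_pos; lra).
  assert (u1 < opnorm T) by nra. assert (u2 < opnorm T) by nra.
  assert (0 < rho) by (unfold rho; apply Rdiv_lt_0_compat; lra).
  assert ((1 - rho) * u1 <= (1 - rho) * opnorm T) by (apply Rmult_le_compat_l; lra).
  assert (rho * u2 < rho * opnorm T) by (apply Rmult_lt_compat_l; lra).
  lra.
Qed.

Lemma bj_at_all_iff_bj_vec x : M_set T x -> M_set A x ->
  (forall lam, bj_at eps T A x lam) <-> bj_vec eps (T x) (A x).
Proof.
  intros [_ hT] [_ hA]. unfold bj_vec, bj_eps.
  split; intros H lam; specialize (H lam); rewrite ?bj_atE, ns_norm_scal, hT, hA in *; exact H.
Qed.

End BirkhoffJames.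

Lemma perturbed_maximizing_sequence {X Y : NormedSpace} (T A : X -> Y) s :
  bounded_linear T -> bounded_linear A -> Rabs s = 1 ->
  exists u : nat -> X, (forall n, ns_norm (u n) <= 1) /\
    (forall n, opnorm (fun x => ns_add (T x) (ns_scal (s * / INR (S n)) (A x)))
                 - (/ INR (S n)) ^ 2 <
               ns_norm (ns_add (T (u n)) (ns_scal (s * / INR (S n)) (A (u n))))) /\
    Un_cv (fun n => ns_norm (T (u n))) (opnorm T).
Proof.
  intros bT bA hs.
  assert (rpos : forall n, 0 < / INR (S n)) by (intro n; apply Rinv_0_lt_compat, lt_0_INR; lia).
  assert (r1 : forall n, / INR (S n) <= 1).
  { intro n. rewrite <- Rinv_1. apply Rinv_le_contravar; [lra|]. apply (le_INR 1). lia. }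
  assert (rabs : forall n, Rabs (s * / INR (S n)) = / INR (S n)).
  { intro n. rewrite Rabs_mult, hs, Rabs_pos_eq by (left; apply rpos). ring. }
  destruct (choice (fun n x => ns_norm x <= 1 /\
              opnorm (fun x => ns_add (T x) (ns_scal (s * / INR (S n)) (A x))) - (/ INR (S n)) ^ 2 <
              ns_norm (ns_add (T x) (ns_scal (s * / INR (S n)) (A x))))) as [u hu].
  { intro n. apply opnorm_approx; [apply bounded_linear_add_scal; assumption|].
    specialize (rpos n). nra. }
  exists u. split; [intro n; apply hu | split; [intro n; apply hu|]].
  pose proof (opnorm_nonneg A bA) as cnn.
  assert (lower : forall n, opnorm T - / INR (S n) * (2 * opnorm A + 1) < ns_norm (T (u n))).
  { intro n. destruct (hu n) as [hu1 hu2].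
    pose proof (opnorm_add_scal_ge T A (s * / INR (S n)) bT bA) as h1.
    pose proof (ns_norm_triangle (T (u n)) (ns_scal (s * / INR (S n)) (A (u n)))) as h2.
    rewrite ns_norm_scal in h2. rewrite rabs in h1, h2.
    pose proof (opnorm_ge A bA (u n) hu1).
    assert (/ INR (S n) * ns_norm (A (u n)) <= / INR (S n) * opnorm A)
      by (apply Rmult_le_compat_l; [left; apply rpos | assumption]).
    specialize (rpos n). specialize (r1 n).
    assert ((/ INR (S n)) ^ 2 <= / INR (S n)) by nra.
    lra. }
  intros d hd.
  destruct (inv_INR_S_eventually_lt (d / (2 * opnorm A + 1))) as [N HN];
    [apply Rdiv_lt_0_compat; lra|].
  exists N. intros n hn. specialize (HN n hn). specialize (lower n).
  pose proof (opnorm_ge T bT (u n) (proj1 (hu n))).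
  assert (/ INR (S n) * (2 * opnorm A + 1) < d).
  { apply (Rmult_lt_compat_r (2 * opnorm A + 1)) in HN; [|lra].
    replace (d / (2 * opnorm A + 1) * (2 * opnorm A + 1)) with d in HN by (field; lra). exact HN. }
  unfold Rdist. rewrite Rabs_left1 by lra. lra.
Qed.

Lemma compact_maximizing_limit {X Y : NormedSpace} (HXR : reflexive X) (T A : X -> Y)
  (HT : compact_op T) (HA : compact_op A) (tpos : 0 < opnorm T)
  (u : nat -> X) (hu : forall n, ns_norm (u n) <= 1)
  (hTu : Un_cv (fun n => ns_norm (T (u n))) (opnorm T)) :
  exists x0 phi, strictly_increasing phi /\ M_set T x0 /\
    converges (fun k => T (u (phi k))) (T x0) /\ converges (fun k => A (u (phi k))) (A x0).
Proof.
  pose proof (compact_op_bounded T HT) as bT. pose proof (compact_op_bounded A HA) as bA.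
  destruct (proj2 HT u hu) as (phi1 & y & hphi1 & cy).
  destruct (proj2 HA (fun n => u (phi1 n)) (fun n => hu (phi1 n))) as (phi2 & z & hphi2 & cz).
  set (phi := fun n => phi1 (phi2 n)).
  assert (hphi : strictly_increasing phi) by exact (strictly_increasing_comp phi1 phi2 hphi1 hphi2).
  assert (cy' : converges (fun k => T (u (phi k))) y)
    by exact (converges_subseq (fun n => T (u (phi1 n))) y phi2 cy hphi2).
  destruct (reflexive_weak_limit_point X HXR (fun k => u (phi k)) (fun k => hu (phi k)))
    as (x0 & hx0 & Hx0).
  assert (Ty : T x0 = y) by exact (weak_limit_point_map _ x0 T y Hx0 bT cy').
  assert (Az : A x0 = z) by exact (weak_limit_point_map _ x0 A z Hx0 bA cz).
  assert (ny : ns_norm y = opnorm T).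
  { apply (UL_sequence (fun k => ns_norm (T (u (phi k))))).
    - exact (converges_norm _ _ cy').
    - exact (Un_cv_subseq _ _ phi hTu hphi). }
  assert (ns_norm x0 >= 1).
  { pose proof (opnorm_bound T bT x0) as h. rewrite Ty, ny in h.
    apply Rle_ge, (Rmult_le_reg_l (opnorm T)); lra. }
  exists x0, phi. rewrite Ty, Az.
  split; [exact hphi | split; [split; [lra | congruence] | split; assumption]].
Qed.

(* The limit point [x0] of a maximizing sequence for the perturbations
   [T + s r_n A], [r_n -> 0], satisfies the inequality on the whole half-line:
   a failure at some [s mu] would, by [norm_gap_small_steps], push [|T + s r_n A|]
   below what [T ⊥_B^eps A] allows. *)
Lemma bj_at_halfline_exists {X Y : NormedSpace} (HXR : reflexive X) eps (heps : 0 <= eps)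
  (T A : X -> Y) (HT : compact_op T) (HA : compact_op A) (tpos : 0 < opnorm T)
  s (hs : Rabs s = 1) (Hbj : bj_op eps T A) :
  exists x, M_set T x /\ forall mu, 0 <= mu -> bj_at eps T A x (s * mu).
Proof.
  pose proof (compact_op_bounded T HT) as bT. pose proof (compact_op_bounded A HA) as bA.
  pose proof (opnorm_nonneg A bA) as cnn.
  destruct (perturbed_maximizing_sequence T A s bT bA hs) as (u & hu & hnorm & hTu).
  destruct (compact_maximizing_limit HXR T A HT HA tpos u hu hTu)
    as (x0 & phi & hphi & Mx0 & cT & cA).
  exists x0. split; [exact Mx0|]. intros mu hmu. apply NNPP. intro nQ.
  destruct (Req_dec mu 0) as [-> | mu0].
  { apply nQ. rewrite Rmult_0_r. exact (bj_at_zero eps T A bA x0 heps Mx0). }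
  rewrite bj_atE, Rabs_mult, hs, Rabs_pos_eq, Rmult_1_l in nQ by (exact bA || lra).
  apply Rnot_ge_lt in nQ.
  destruct (norm_gap_small_steps (fun k => T (u (phi k))) (fun k => A (u (phi k))) s
              (opnorm T) (opnorm A) eps mu _ hs heps cnn ltac:(lra)
              (fun k => opnorm_ge T bT _ (hu _)) (fun k => opnorm_ge A bA _ (hu _))
              (converges_norm _ _ (converges_add_scal _ _ _ _ (s * mu) cT cA)) nQ)
    as (delta & N & hdelta & Hgap).
  destruct (inv_INR_S_eventually_lt delta hdelta) as [N2 HN2].
  set (n := phi (N + N2)%nat).
  assert (hn : (N2 <= n)%nat)
    by (pose proof (strictly_increasing_ge phi hphi (N + N2)); unfold n; lia).
  set (r := / INR (S n)).
  assert (rpos : 0 < r) by (apply Rinv_0_lt_compat, lt_0_INR; lia).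
  specialize (Hgap (N + N2)%nat r ltac:(lia) (conj rpos (Rlt_le _ _ (HN2 n hn)))).
  specialize (hnorm n). fold r in hnorm.
  specialize (Hbj (s * r)). unfold bj_eps in Hbj. cbv beta in Hbj.
  rewrite opnorm_scal, Rabs_mult, hs, Rabs_pos_eq in Hbj by (exact bA || lra).
  pose proof (opnorm_nonneg _ (bounded_linear_add_scal T A (s * r) bT bA)).
  fold n in Hgap.
  set (F := opnorm (fun x => ns_add (T x) (ns_scal (s * r) (A x)))) in *.
  set (h := ns_norm (ns_add (T (u n)) (ns_scal (s * r) (A (u n))))) in *.
  assert (F < h + r ^ 2) by lra.
  assert (F ^ 2 < (h + r ^ 2) ^ 2) by nra.
  lra.
Qed.

Definition seq_closed {X : NormedSpace} (P : X -> Prop) : Prop :=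
  forall (y : nat -> X) z, converges y z -> (forall n, P (y n)) -> P z.

Lemma compact_set_seq_closed {X : NormedSpace} (D : X -> Prop) : compact_set D -> seq_closed D.
Proof.
  intros HD y z cy hy. destruct (HD y hy) as (phi & l & hphi & Dl & cl).
  rewrite (converges_unique _ _ _ (converges_subseq y z phi cy hphi) cl). exact Dl.
Qed.

Lemma seq_closedI {X : NormedSpace} (P Q : X -> Prop) :
  seq_closed P -> seq_closed Q -> seq_closed (fun x => P x /\ Q x).
Proof. intros hP hQ y z cy hy. split; [apply (hP y) | apply (hQ y)]; auto; apply hy. Qed.

Lemma open_set_compl {X : NormedSpace} (P : X -> Prop) :
  seq_closed P -> Defs.open_set (fun x : X => ~ P x).
Proof.
  intros HP x nPx. apply NNPP. intro H.
  assert (Hy : forall n : nat, exists y, ns_norm (ns_sub y x) < / INR (S n) /\ P y).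
  { intro n. apply NNPP. intro hn. apply H. exists (/ INR (S n)). split.
    - apply Rinv_0_lt_compat, lt_0_INR. lia.
    - intros y hy hP. apply hn. exists y. auto. }
  destruct (choice _ Hy) as [y hy]. apply nPx. apply (HP y); [|intro n; apply hy].
  intros e he. destruct (inv_INR_S_eventually_lt e he) as [N HN]. exists N. intros n hn.
  eapply Rlt_trans; [apply hy | apply HN; exact hn].
Qed.

(* Connectedness, with the complements of the two closed sets as the open cover. *)
Lemma connected_closed_cover {X : NormedSpace} (D P Q : X -> Prop) :
  connected_set D -> seq_closed P -> seq_closed Q ->
  (forall x, D x -> P x \/ Q x) -> (exists x, D x /\ P x) -> (exists x, D x /\ Q x) ->
  exists x, D x /\ P x /\ Q x.
Proof.
  intros HD HP HQ Hcov [xp [Dp Pp]] [xq [Dq Qq]]. apply NNPP. intro Hno.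
  destruct (HD (fun x => ~ Q x) (fun x => ~ P x)) as (z & Dz & nQz & nPz).
  - apply open_set_compl. exact HQ.
  - apply open_set_compl. exact HP.
  - intros x Dx. apply NNPP. intro h. apply Hno. exists x. split; [exact Dx|].
    split; apply NNPP; intro h'; apply h; auto.
  - exists xp. split; [exact Dp|]. intro Qp. apply Hno. exists xp. auto.
  - exists xq. split; [exact Dq|]. intro Pq. apply Hno. exists xq. auto.
  - destruct (Hcov z Dz); auto.
Qed.

Lemma bj_at_seq_closed {X Y : NormedSpace} eps (T A : X -> Y) lam :
  bounded_linear T -> bounded_linear A -> seq_closed (fun x => bj_at eps T A x lam).
Proof.
  intros bT bA y z cy hy. unfold bj_at in *.
  apply Rle_ge, (@Rle_cv_lim
    (fun _ => opnorm T ^ 2 - 2 * eps * opnorm T * opnorm (fun y => ns_scal lam (A y)))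
    (fun n => ns_norm (ns_add (T (y n)) (ns_scal lam (A (y n)))) ^ 2));
    [intro n; apply Rge_le, hy | apply Un_cv_const|].
  apply (continuity_seq (fun r => r ^ 2)); [apply derivable_continuous_pt, derivable_pt_pow|].
  apply converges_norm.
  exact (converges_bounded_linear _ y z (bounded_linear_add_scal T A lam bT bA) cy).
Qed.

Lemma bj_op_bj_at_exists {X Y : NormedSpace} (HXR : reflexive X) eps (heps : 0 <= eps)
  (T A : X -> Y) (HT : compact_op T) (HA : compact_op A)
  (D : X -> Prop) (HDne : exists x, D x) (HDc : compact_set D) (HDconn : connected_set D)
  (HM : forall x, M_set T x <-> (D x \/ D (ns_opp x))) :
  bj_op eps T A -> exists x, M_set T x /\ forall lam, bj_at eps T A x lam.
Proof.
  intro Hbj. pose proof (compact_op_bounded T HT) as bT. pose proof (compact_op_bounded A HA) as bA.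
  destruct (Rle_lt_or_eq_dec 0 (opnorm T) (opnorm_nonneg T bT)) as [tpos | t0].
  2:{ destruct HDne as [x Dx]. exists x. split; [apply HM; auto|]. intro lam.
      unfold bj_at. rewrite <- t0.
      pose proof (pow2_ge_0 (ns_norm (ns_add (T x) (ns_scal lam (A x))))). lra. }
  set (half := fun sg x => forall mu, 0 <= mu -> bj_at eps T A x (sg * mu)).
  assert (inD : forall sg, Rabs sg = 1 -> exists x, D x /\ half sg x).
  { intros sg hsg.
    destruct (bj_at_halfline_exists HXR eps heps T A HT HA tpos sg hsg Hbj) as (x & Mx & hx).
    destruct (proj1 (HM x) Mx) as [Dx | Dx]; [exists x; auto|].
    exists (ns_opp x). split; [exact Dx|]. intros mu hmu.
    apply (bj_at_opp eps T A bT bA). rewrite ns_opp_opp. auto. }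
  assert (closed : forall sg, seq_closed (fun x => D x /\ half sg x)).
  { intro sg. apply seq_closedI; [exact (compact_set_seq_closed D HDc)|].
    intros y z cy hy mu hmu. apply (bj_at_seq_closed eps T A (sg * mu) bT bA y z cy).
    intro n. apply hy. exact hmu. }
  destruct (connected_closed_cover D _ _ HDconn (closed 1) (closed (-1)))
    as (x & Dx & [_ hpos] & [_ hneg]).
  - intros x Dx.
    destruct (bj_at_halfline_dichotomy eps T A bA x heps tpos (proj2 (HM x) (or_introl Dx)))
      as [h | h]; [left | right]; split; try exact Dx; intros mu hmu.
    + rewrite Rmult_1_l. auto.
    + replace (-1 * mu) with (- mu) by ring. auto.
  - destruct (inD 1 Rabs_R1) as (x & Dx & hx). exists x. auto.
  - destruct (inD (-1) ltac:(rewrite Rabs_left; lra)) as (x & Dx & hx). exists x. auto.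
  - exists x. split; [apply HM; auto|]. intro lam. destruct (Rle_dec 0 lam).
    + replace lam with (1 * lam) by ring. apply hpos. exact r.
    + replace lam with (-1 * - lam) by ring. apply hneg. lra.
Qed.

Theorem mainTheorem6 (X Y : NormedSpace) (HXB : Banach X) (HXR : reflexive X)
  (eps : R) (Heps : 0 <= eps < 1)
  (T A : X -> Y) (HT : compact_op T) (HA : compact_op A)
  (D : X -> Prop) (HDne : exists x, D x) (HDS : forall x, D x -> ns_norm x = 1)
  (HDc : compact_set D) (HDconn : connected_set D)
  (HM : forall x, M_set T x <-> (D x \/ D (ns_opp x))) :
  (bj_op eps T A <->
     exists x, M_set T x /\
       forall lam : R,
         (ns_norm (ns_add (T x) (ns_scal lam (A x))))^2 >=
           (opnorm T)^2 - 2 * eps * opnorm T * opnorm (fun y => ns_scal lam (A y)))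
  /\
  ((forall x, M_set T x -> M_set A x) ->
     (bj_op eps T A <-> exists x, M_set T x /\ bj_vec eps (T x) (A x))).
Proof.
  pose proof (compact_op_bounded T HT) as bT. pose proof (compact_op_bounded A HA) as bA.
  assert (Hbj : bj_op eps T A <-> exists x, M_set T x /\ forall lam, bj_at eps T A x lam).
  { split.
    - exact (bj_op_bj_at_exists HXR eps (proj1 Heps) T A HT HA D HDne HDc HDconn HM).
    - intros (x & [hx _] & H). exact (bj_op_of_bj_at eps T A bT bA x hx H). }
  split; [exact Hbj|]. intro HMA. rewrite Hbj.
  split; intros (x & Mx & H); exists x; split; try exact Mx;
    [apply (bj_at_all_iff_bj_vec eps T A bA x Mx (HMA x Mx)) |
     apply <- (bj_at_all_iff_bj_vec eps T A bA x Mx (HMA x Mx))]; exact H.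
Qed.
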